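(* Let $b \ge 1$ be an integer and let $L_{1,b} = \{C_{1,1}, C_{2,1}\} \cup \{C_{1,j} : 1 < j \le b+1\}$, of size $n = b+2$. Then on the $n \times n$ board, $2 \le \mathrm{cp}_{\mathrm{free}}(L_{1,b}) \le 4$.
   Context: For integers $i,j$, $C_{i,j}$ denotes the unit square cell in column $i$ and row $j$ of the integer grid (columns numbered left to right, rows numbered top to bottom). A polyomino is a finite set of cells; its size is its number of cells. For a polyomino $\mathcal{P}$ of size $n$ the board is $\mathbb{B} = \{C_{i,j} : 1 \le i,j \le n\}$. The shift of $\mathcal{P}$ by integers $(c,d)$ is $\mathcal{P}+(c,d) = \{C_{x+c,y+d} : C_{x,y} \in \mathcal{P}\}$. For $0<a\le b$ and $L_{a,b} = \{C_{i,1} : 1 \le i \le a+1\} \cup \{C_{1,j} : 1 < j \le b+1\}$, the rotations by $90^\circ, 180^\circ, 270^\circ$ clockwise are $LR_{a,b} = \{C_{i,1} : 1 \le i \le b+1\} \cup \{C_{b+1,j} : 1 \le j \le a+1\}$, $LR^2_{a,b} = \{C_{i,b+1} : 1 \le i \le a+1\} \cup \{C_{a+1,j} : 1 \le j \le b+1\}$, $LR^3_{a,b} = \{C_{i,a+1} : 1 \le i \le b+1\} \cup \{C_{1,j} : 1 \le j \le a+1\}$ (reflections are not allowed). A free copy of $L_{a,b}$ is any shift of one of these four. A set of polyominoes is a valid arrangement if each is contained in $\mathbb{B}$ and they are pairwise disjoint. A free packing of $\mathcal{P}$ is a set of free copies of $\mathcal{P}$ forming a valid arrangement such that adding any further free copy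 of $\mathcal{P}$ yields an invalid arrangement. The clumsy free packing number $\mathrm{cp}_{\mathrm{free}}(\mathcal{P})$ is the minimum number of polyominoes in a free packing of $\mathcal{P}$ on the $n \times n$ board. *)

From HB Require Import structures.
From mathcomp Require Import all_boot all_order all_algebra.
From mathcomp Require Import finmap.
Set Implicit Arguments. Unset Strict Implicit. Unset Printing Implicit Defensive.
Import Order.TTheory GRing.Theory Num.Theory.
Local Open Scope fset_scope.
Local Open Scope ring_scope.

(* A cell C_{i,j} is the pair (i, j) : column i, row j. *)
Definition cell := (int * int)%type.
Definition polyomino := {fset cell}.

Definition shift (P : polyomino) (c d : int) : polyomino :=
  [fset (x.1 + c, x.2 + d) | x in P].

Definition hseg (lo hi : nat) (r : int) : polyomino :=
  [fset ((i%:Z), r) | i in iota lo (hi.+1 - lo)%N].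
Definition vseg (k : int) (lo hi : nat) : polyomino :=
  [fset (k, (j%:Z)) | j in iota lo (hi.+1 - lo)%N].

(* L_{a,b} and its clockwise rotations, exactly as in the paper. *)
Definition Lab (a b : nat) : polyomino :=
  hseg 1 a.+1 1 `|` vseg 1 2 b.+1.
Definition LR1 (a b : nat) : polyomino :=
  hseg 1 b.+1 1 `|` vseg (b.+1)%:Z 1 a.+1.
Definition LR2 (a b : nat) : polyomino :=
  hseg 1 a.+1 (b.+1)%:Z `|` vseg (a.+1)%:Z 1 b.+1.
Definition LR3 (a b : nat) : polyomino :=
  hseg 1 b.+1 (a.+1)%:Z `|` vseg 1 1 a.+1.

Definition free_copy (a b : nat) (Q : polyomino) : Prop :=
  exists c d : int,
    Q = shift (Lab a b) c d \/ Q = shift (LR1 a b) c d \/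
    Q = shift (LR2 a b) c d \/ Q = shift (LR3 a b) c d.

Definition in_board (n : nat) (x : cell) : Prop :=
  1 <= x.1 <= n%:Z /\ 1 <= x.2 <= n%:Z.

Definition valid_arrangement (n : nat) (S : {fset polyomino}) : Prop :=
  (forall Q, Q \in S -> forall x, x \in Q -> in_board n x) /\
  (forall Q1 Q2, Q1 \in S -> Q2 \in S -> Q1 != Q2 -> [disjoint Q1 & Q2]).

Definition free_packing (a b : nat) (S : {fset polyomino}) : Prop :=
  let n := #|` Lab a b| in
  (forall Q, Q \in S -> free_copy a b Q) /\
  valid_arrangement n S /\
  (forall Q, free_copy a b Q -> Q \notin S -> ~ valid_arrangement n (Q |` S)).

Definition is_cp_free (a b : nat) (k : nat) : Prop :=
  (exists S, free_packing a b S /\ #|` S| = k) /\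
  (forall S, free_packing a b S -> (k <= #|` S|)%N).

From mathcomp Require Import all_boot all_order all_algebra finmap zify.
From Stdlib Require Import Classical Wf_nat.
Set Implicit Arguments. Unset Strict Implicit. Unset Printing Implicit Defensive.
Import Order.TTheory GRing.Theory Num.Theory.
Local Open Scope fset_scope.
Local Open Scope ring_scope.

(* Upper bound: for b >= 2 four copies arranged as a pinwheel along the sides
   of the board leave no room for a fifth copy, and on the 3 x 3 board
   (b = 1) two copies already do.  Lower bound: whatever single copy lies on
   the board, one of four fixed copies near the top-left corner misses it, so
   a free packing needs at least two copies. *)

Lemma mem_shift (P : polyomino) c d (x : cell) :
  (x \in shift P c d) = ((x.1 - c, x.2 - d) \in P).
Proof.
apply/imfsetP/idP => [[y yP ->]|xP] /=.
  by rewrite !addrK -surjective_pairing.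
by exists (x.1 - c, x.2 - d); rewrite //= !subrK; case: x {xP}.
Qed.

Lemma mem_hseg lo hi r (x : cell) :
  (x \in hseg lo hi r) = [&& x.2 == r, lo%:Z <= x.1 & x.1 <= hi%:Z].
Proof.
apply/imfsetP/idP => [[i /= iP ->]|] /=.
  by rewrite mem_iota in iP; rewrite eqxx /=; lia.
case: x => x1 x2 /= /and3P [/eqP -> lo_x1 x1_hi].
by exists `|x1|%N; rewrite /= ?mem_iota; [lia | congr (_, _); lia].
Qed.

Lemma mem_vseg k lo hi (x : cell) :
  (x \in vseg k lo hi) = [&& x.1 == k, lo%:Z <= x.2 & x.2 <= hi%:Z].
Proof.
apply/imfsetP/idP => [[j /= jP ->]|] /=.
  by rewrite mem_iota in jP; rewrite eqxx /=; lia.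
case: x => x1 x2 /= /and3P [/eqP -> lo_x2 x2_hi].
by exists `|x2|%N; rewrite /= ?mem_iota; [lia | congr (_, _); lia].
Qed.

Lemma card_hseg lo hi r : #|` hseg lo hi r| = (hi.+1 - lo)%N.
Proof.
rewrite card_imfset /= ?undup_id ?iota_uniq ?size_iota //.
by move=> i j /(congr1 fst) /= /eqP; rewrite eqz_nat => /eqP.
Qed.

Lemma card_vseg k lo hi : #|` vseg k lo hi| = (hi.+1 - lo)%N.
Proof.
rewrite card_imfset /= ?undup_id ?iota_uniq ?size_iota //.
by move=> i j /(congr1 snd) /= /eqP; rewrite eqz_nat => /eqP.
Qed.

Lemma card_Lab a b : #|` Lab a b| = (a + b).+1.
Proof.
have disj : [disjoint hseg 1 a.+1 1 & vseg 1 2 b.+1].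
  by apply/fdisjointP => x; rewrite mem_hseg mem_vseg; lia.
have [_ /eqP] := leq_card_fsetU (hseg 1 a.+1 1) (vseg 1 2 b.+1).
by rewrite disj card_hseg card_vseg /Lab => ->; lia.
Qed.

Ltac mem_L := rewrite /Lab /LR1 /LR2 /LR3 ?mem_shift ?in_fsetU ?mem_hseg ?mem_vseg /=.

Lemma fdisjointPn (K : choiceType) (A B : {fset K}) :
  ~~ [disjoint A & B]%fset -> exists2 x, x \in A & x \in B.
Proof.
by rewrite -fsetI_eq0 => /fset0Pn [x]; rewrite in_fsetI => /andP [] xA xB; exists x.
Qed.

Lemma fset4P (T : choiceType) (a b c d x : T) :
  reflect [\/ x = a, x = b, x = c | x = d] (x \in [fset a; b; c; d]).
Proof.
rewrite !inE; apply: (iffP idP) => [|[] ->]; rewrite ?eqxx ?orbT //.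
by case/orP => [/orP[/orP[]|]|] /eqP; [apply: Or41 | apply: Or42 | apply: Or43 | apply: Or44].
Qed.

(* The corner and the two arm ends of each orientation. *)
Lemma free_copy_ends a b Q (R : cell -> Prop) :
  free_copy a b Q -> (forall x, x \in Q -> R x) ->
  exists c d : int,
    [\/ Q = shift (Lab a b) c d /\
          [/\ R (1 + c, 1 + d), R (a.+1%:Z + c, 1 + d) & R (1 + c, b.+1%:Z + d)],
        Q = shift (LR1 a b) c d /\
          [/\ R (1 + c, 1 + d), R (b.+1%:Z + c, 1 + d) & R (b.+1%:Z + c, a.+1%:Z + d)],
        Q = shift (LR2 a b) c d /\
          [/\ R (a.+1%:Z + c, 1 + d), R (1 + c, b.+1%:Z + d) & R (a.+1%:Z + c, b.+1%:Z + d)]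
      | Q = shift (LR3 a b) c d /\
          [/\ R (1 + c, 1 + d), R (1 + c, a.+1%:Z + d) & R (b.+1%:Z + c, a.+1%:Z + d)]].
Proof.
move=> [c [d shape]] RQ; exists c, d.
by case: shape => [|[|[|]]] QE; [apply: Or41|apply: Or42|apply: Or43|apply: Or44];
  split=> //; split; apply: RQ; rewrite QE; mem_L; lia.
Qed.

Lemma free_copy_neq0 a b Q : free_copy a b Q -> Q != fset0.
Proof.
move=> /(@free_copy_ends _ _ _ (fun x => x \in Q)) /(_ (fun x xQ => xQ)).
by case=> c [d [] [_ [xQ _ _]]]; apply/fset0Pn; eexists; exact: xQ.
Qed.

Definition on_board (n : nat) (Q : polyomino) : Prop :=
  forall x, x \in Q -> in_board n x.

Definition blocks (a b n : nat) (S : {fset polyomino}) : Prop :=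
  forall Q, free_copy a b Q -> on_board n Q ->
    ~ (forall P, P \in S -> [disjoint Q & P]%fset).

Lemma valid_arrangement_fset1U n (S : {fset polyomino}) Q :
  valid_arrangement n S -> on_board n Q ->
  (forall P, P \in S -> [disjoint Q & P]%fset) ->
  valid_arrangement n (Q |` S).
Proof.
move=> [onS disjS] onQ disjQ; split.
  by move=> R /fset1UP [->|]; [exact: onQ | exact: onS].
move=> R1 R2 /fset1UP [->|R1S] /fset1UP [->|R2S];
  [by rewrite eqxx | by move=> _; exact: disjQ |
   by move=> _; rewrite fdisjoint_sym; exact: disjQ | exact: disjS].
Qed.

Lemma free_packingP a b S :
  free_packing a b S <->
  [/\ forall Q, Q \in S -> free_copy a b Q,
      valid_arrangement #|` Lab a b| S & blocks a b #|` Lab a b| S].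
Proof.
split=> [[copies [valid maximal]] | [copies valid blocking]].
  split=> // Q fQ onQ disjQ.
  have QS : Q \notin S.
    apply/negP => /disjQ; rewrite -fsetI_eq0 fsetIid.
    by apply/negP; exact: free_copy_neq0 fQ.
  exact: maximal Q fQ QS (valid_arrangement_fset1U valid onQ disjQ).
split=> //; split=> // Q fQ QS [onQS disjQS].
apply: (blocking Q fQ (onQS Q (fset1U1 Q S))) => P PS.
by apply: disjQS; [exact: fset1U1 | exact: fset1Ur | apply: contraNneq QS => ->].
Qed.

Lemma is_cp_free_between a b l m :
  (exists S, free_packing a b S /\ (#|` S| <= m)%N) ->
  (forall S, free_packing a b S -> (l <= #|` S|)%N) ->
  exists k, is_cp_free a b k /\ (l <= k <= m)%N.
Proof.
move=> [S0 [packS0 S0_le_m]] lower.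
pose size_of_packing k := exists S, free_packing a b S /\ #|` S| = k.
have [k [[[S [packS <-]] least] _]] :
    has_unique_least_element le size_of_packing.
  apply: dec_inh_nat_subset_has_unique_least_element; last by exists #|` S0|, S0.
  by move=> k; exact: classic.
exists #|` S|; split.
  split; first by exists S.
  by move=> S' packS'; apply/ssrnat.leP; apply: least; exists S'.
rewrite lower //=; apply: leq_trans S0_le_m; apply/ssrnat.leP; apply: least; by exists S0.
Qed.

Definition pinwheel b : {fset polyomino} :=
  [fset shift (LR1 1 b) 0 0; shift (LR2 1 b) b%:Z 0; shift (LR3 1 b) 1 b%:Z;
        shift (Lab 1 b) 0 1].

Lemma pinwheel_free_packing b : (2 <= b)%N -> free_packing 1 b (pinwheel b).
Proof.
move=> b_ge2; apply/free_packingP; rewrite card_Lab; split; [|split|].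
- move=> Q /fset4P [] ->.
  + by exists 0, 0; right; left.
  + by exists b%:Z, 0; right; right; left.
  + by exists 1, b%:Z; right; right; right.
  + by exists 0, 1; left.
- by move=> Q /fset4P [] -> x; rewrite /in_board; mem_L; lia.
- move=> Q1 Q2 /fset4P [] -> /fset4P [] -> //; rewrite ?eqxx // => _;
    by apply/fdisjointP => x; mem_L; lia.
move=> Q fQ onQ disjQ.
have avoid x : x \in Q -> in_board (1 + b).+1 x /\
    x \notin shift (LR1 1 b) 0 0 /\ x \notin shift (LR2 1 b) b%:Z 0 /\
    x \notin shift (LR3 1 b) 1 b%:Z /\ x \notin shift (Lab 1 b) 0 1.
  move=> xQ; split; first exact: onQ.
  by do !split; apply: (fdisjointP (disjQ _ _)) xQ; rewrite !inE eqxx ?orbT.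
by case: (free_copy_ends fQ avoid) => c [d [] [_ []]]; rewrite /in_board; mem_L; lia.
Qed.

Definition two_copies : {fset polyomino} :=
  [fset shift (Lab 1 1) 0 0; shift (LR2 1 1) 1 1].

Lemma two_copies_free_packing : free_packing 1 1 two_copies.
Proof.
apply/free_packingP; rewrite card_Lab; split; [|split|].
- move=> Q /fset2P [] ->.
  + by exists 0, 0; left.
  + by exists 1, 1; right; right; left.
- by move=> Q /fset2P [] -> x; rewrite /in_board; mem_L; lia.
- move=> Q1 Q2 /fset2P [] -> /fset2P [] -> //; rewrite ?eqxx // => _;
    by apply/fdisjointP => x; mem_L; lia.
move=> Q fQ onQ disjQ.
have avoid x : x \in Q -> in_board 3 x /\
    x \notin shift (Lab 1 1) 0 0 /\ x \notin shift (LR2 1 1) 1 1.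
  move=> xQ; split; first exact: onQ.
  by do !split; apply: (fdisjointP (disjQ _ _)) xQ; rewrite !inE eqxx ?orbT.
by case: (free_copy_ends fQ avoid) => c [d [] [_ []]]; rewrite /in_board; mem_L; lia.
Qed.

Definition spare_copies b : seq polyomino :=
  [:: shift (Lab 1 b) 0 0; shift (LR1 1 b) 1 0; shift (LR2 1 b) 1 1;
      shift (LR3 1 b) 0 1].

Lemma spare_copies_on_board b Q : (1 <= b)%N ->
  Q \in spare_copies b -> free_copy 1 b Q /\ on_board b.+2 Q.
Proof.
move=> b_ge1; rewrite !inE => /or4P [] /eqP ->;
  (split; last by move=> x; rewrite /in_board; mem_L; lia).
- by exists 0, 0; left.
- by exists 1, 0; right; left.
- by exists 1, 1; right; right; left.
- by exists 0, 1; right; right; right.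
Qed.

Lemma board_copy_misses_spare b P : (1 <= b)%N ->
  free_copy 1 b P -> on_board b.+2 P ->
  has (fun Q => [disjoint P & Q]%fset) (spare_copies b).
Proof.
move=> b_ge1 fP onP; apply: contraT; rewrite -all_predC /= andbT => /and4P [].
case: (free_copy_ends fP onP) => c [d [] [-> []]] end1 end2 end3
  /fdisjointPn [[x1 y1] P1 S1] /fdisjointPn [[x2 y2] P2 S2]
  /fdisjointPn [[x3 y3] P3 S3] /fdisjointPn [[x4 y4] P4 S4];
  move: end1 end2 end3 P1 S1 P2 S2 P3 S3 P4 S4; rewrite /in_board; mem_L; lia.
Qed.

Lemma free_packing_card_ge2 b S : (1 <= b)%N -> free_packing 1 b S -> (2 <= #|` S|)%N.
Proof.
move=> b_ge1 /free_packingP [copies [onS _] blocking].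
rewrite card_Lab add1n in onS blocking; rewrite leqNgt; apply/negP => S_le1.
have [P [fP onP sub]] : exists P,
    [/\ free_copy 1 b P, on_board b.+2 P & forall R, R \in S -> R = P].
  have [S0|[P S1]] : S = fset0 \/ exists P, S = [fset P].
    move: S_le1; rewrite ltnS leq_eqVlt ltnS leqn0.
    by case/orP => [/cardfs1P | /eqP/cardfs0_eq]; [right | left].
  - have [fL onL] := spare_copies_on_board b_ge1 (mem_head _ _ : _ \in spare_copies b).
    by exists (shift (Lab 1 b) 0 0); split=> // R; rewrite S0 inE.
  - have PS : P \in S by rewrite S1 fset11.
    exists P; split; [exact: copies PS | exact: onS PS |].
    by move=> R; rewrite S1 => /fset1P.
have /hasP [Q spareQ disjPQ] := board_copy_misses_spare b_ge1 fP onP.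
have [fQ onQ] := spare_copies_on_board b_ge1 spareQ.
by apply: (blocking Q fQ onQ) => R /sub ->; rewrite fdisjoint_sym.
Qed.

Theorem corollary1 (b : nat) (hb : (1 <= b)%N) :
  #|` Lab 1 b| = b.+2 /\
  exists k : nat, is_cp_free 1 b k /\ (2 <= k <= 4)%N.
Proof.
split; first by rewrite card_Lab add1n.
apply: is_cp_free_between; last by move=> S; exact: free_packing_card_ge2 hb.
have [b_ge2 | b_le1] := ltnP 1 b.
  exists (pinwheel b); split; first exact: pinwheel_free_packing.
  by rewrite /pinwheel !cardfsU !cardfs1; lia.
have -> : b = 1%N by lia.
exists two_copies; split; first exact: two_copies_free_packing.
by rewrite /two_copies !cardfsU !cardfs1; lia.
Qed.
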